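(* For every formula $\varphi$ (in the syntax described in the context) there exists a formula $\varphi'$ in normal form such that $\varphi' \equiv \varphi$ and $|\varphi'| \leq 4^{7|\varphi|}$.
   Context: Fix a finite set $Ap$ of atomic propositions. A word is an infinite sequence $w = w[0]w[1]w[2]\dots$ of letters of $\Sigma = 2^{Ap}$, and $w_i$ denotes the suffix $w[i]w[i+1]\dots$. Formulas are generated by the grammar $\varphi ::= \mathbf{true} \mid \mathbf{false} \mid a \mid \neg a \mid \varphi\wedge\varphi \mid \varphi\vee\varphi \mid \mathbf{X}\varphi \mid \varphi\,\mathbf{U}\,\varphi \mid \varphi\,\mathbf{W}\,\varphi \mid \mathbf{GF}\varphi \mid \mathbf{FG}\varphi$ with $a \in Ap$, where $\mathbf{GF}$ and $\mathbf{FG}$ are single unary operators (the limit operators). Semantics: $w\models\mathbf{true}$ always, $w\not\models\mathbf{false}$; $w\models a$ iff $a\in w[0]$; $w\models\neg a$ iff $a\notin w[0]$; $\wedge,\vee$ as usual; $w\models\mathbf{X}\varphi$ iff $w_1\models\varphi$; $w\models\varphi\mathbf{U}\psi$ iff there is $k$ with $w_k\models\psi$ and $w_j\models\varphi$ for all $j<k$; $w\models\varphi\mathbf{W}\psi$ iff $w_k\models\varphi$ for all $k$ or $w\models\varphi\mathbf{U}\psi$; $w\models\mathbf{GF}\varphi$ iff $w_k\models\varphi$ for infinitely many $k$; $w\models\mathbf{FG}\varphi$ iff there is $n$ with $w_k\models\varphi$ for all $k\geq n$. Two formulas are equivalent ($\equiv$) if they are satisfied by exactly the same words. The syntax tree $T_\varphi$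 has leaves $\mathbf{true},\mathbf{false},a,\neg a$ and one internal node per operator occurrence with its operands as children; $|\varphi|$ is the number of nodes of $T_\varphi$. A node whose subformula has top operator $\mathbf{U}$ (resp. $\mathbf{W}$, $\mathbf{X}$, $\mathbf{GF}$, $\mathbf{FG}$) is a $\mathbf{U}$-node (resp. $\mathbf{W}$-, $\mathbf{X}$-, $\mathbf{GF}$-, $\mathbf{FG}$-node); $\mathbf{GF}$- and $\mathbf{FG}$-nodes are limit nodes; $\mathbf{U}$-, $\mathbf{W}$-, $\mathbf{X}$-, $\mathbf{GF}$-, $\mathbf{FG}$-nodes are temporal nodes. A node is under another node if it is a proper descendant of it in $T_\varphi$. A formula is in normal form if (1) no $\mathbf{U}$-node is under a $\mathbf{W}$-node; (2) no limit node is under another temporal node; (3) no $\mathbf{W}$-node is under a $\mathbf{GF}$-node and no $\mathbf{U}$-node is under an $\mathbf{FG}$-node. *)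

From mathcomp Require Import all_boot.
Set Implicit Arguments.
Unset Strict Implicit.
Unset Printing Implicit Defensive.

Inductive formula (Ap : Type) : Type :=
  | FTrue | FFalse
  | FAtom of Ap
  | FNAtom of Ap
  | FAnd of formula Ap & formula Ap
  | FOr of formula Ap & formula Ap
  | FX of formula Ap
  | FU of formula Ap & formula Ap
  | FW of formula Ap & formula Ap
  | FGF of formula Ap
  | FFG of formula Ap.

Arguments FTrue {Ap}. Arguments FFalse {Ap}.

Definition word (Ap : finType) := nat -> {set Ap}.

Definition suffix (Ap : finType) (w : word Ap) (i : nat) : word Ap :=
  fun k => w (i + k).

Fixpoint sat (Ap : finType) (w : word Ap) (f : formula Ap) : Prop :=
  match f with
  | FTrue => True
  | FFalse => False
  | FAtom a => a \in w 0
  | FNAtom a => a \notin w 0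
  | FAnd f1 f2 => sat w f1 /\ sat w f2
  | FOr f1 f2 => sat w f1 \/ sat w f2
  | FX f1 => sat (suffix w 1) f1
  | FU f1 f2 => exists k, sat (suffix w k) f2 /\ forall j, j < k -> sat (suffix w j) f1
  | FW f1 f2 => (forall k, sat (suffix w k) f1) \/
                (exists k, sat (suffix w k) f2 /\ forall j, j < k -> sat (suffix w j) f1)
  | FGF f1 => forall n, exists k, n <= k /\ sat (suffix w k) f1
  | FFG f1 => exists n, forall k, n <= k -> sat (suffix w k) f1
  end.

Definition fequiv (Ap : finType) (f g : formula Ap) : Prop :=
  forall w : word Ap, sat w f <-> sat w g.

Fixpoint fsize (Ap : Type) (f : formula Ap) : nat :=
  match f with
  | FTrue | FFalse | FAtom _ | FNAtom _ => 1
  | FAnd f1 f2 | FOr f1 f2 | FU f1 f2 | FW f1 f2 => (fsize f1 + fsize f2).+1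
  | FX f1 | FGF f1 | FFG f1 => (fsize f1).+1
  end.

Fixpoint hasU (Ap : Type) (f : formula Ap) : bool :=
  match f with
  | FTrue | FFalse | FAtom _ | FNAtom _ => false
  | FAnd f1 f2 | FOr f1 f2 | FW f1 f2 => hasU f1 || hasU f2
  | FU _ _ => true
  | FX f1 | FGF f1 | FFG f1 => hasU f1
  end.

Fixpoint hasW (Ap : Type) (f : formula Ap) : bool :=
  match f with
  | FTrue | FFalse | FAtom _ | FNAtom _ => false
  | FAnd f1 f2 | FOr f1 f2 | FU f1 f2 => hasW f1 || hasW f2
  | FW _ _ => true
  | FX f1 | FGF f1 | FFG f1 => hasW f1
  end.

Fixpoint hasLimit (Ap : Type) (f : formula Ap) : bool :=
  match f with
  | FTrue | FFalse | FAtom _ | FNAtom _ => false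
  | FAnd f1 f2 | FOr f1 f2 | FU f1 f2 | FW f1 f2 => hasLimit f1 || hasLimit f2
  | FX f1 => hasLimit f1
  | FGF _ | FFG _ => true
  end.

(* Normal form:
   (1) no U-node under a W-node;
   (2) no limit node under another temporal node (U, W, X, GF, FG);
   (3) no W-node under a GF-node and no U-node under an FG-node.
   "Under" = proper descendant, so each condition is checked on the children
   of the relevant node, recursively for every node of the tree. *)
Fixpoint normal_form (Ap : Type) (f : formula Ap) : bool :=
  match f with
  | FTrue | FFalse | FAtom _ | FNAtom _ => true
  | FAnd f1 f2 | FOr f1 f2 => normal_form f1 && normal_form f2
  | FX f1 => ~~ hasLimit f1 && normal_form f1
  | FU f1 f2 => ~~ hasLimit f1 && ~~ hasLimit f2 && normal_form f1 && normal_form f2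
  | FW f1 f2 => ~~ hasU f1 && ~~ hasU f2 && ~~ hasLimit f1 && ~~ hasLimit f2
                && normal_form f1 && normal_form f2
  | FGF f1 => ~~ hasLimit f1 && ~~ hasW f1 && normal_form f1
  | FFG f1 => ~~ hasLimit f1 && ~~ hasU f1 && normal_form f1
  end.

(* Fix a word w and guess, for every U-node of phi, whether GF of that node
   holds on w, for every W-node whether FG of it holds, and for every limit
   node whether it holds.  Relative to a correct guess, phi agrees from some
   position on with two formulas without limit operators: its nu-form, in which
   U-nodes guessed true become W-nodes and the others false (so it has no U),
   and its mu-form, in which W-nodes guessed true become true and the others
   U-nodes (so it has no W).  At every position phi then agrees with its
   sigma-form, in which a W-node  f W g  guessed true becomes
   f U (g \/ G nu(f)).  The true guesses are expressed by GF and FG of mu- and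
   nu-forms; false guesses need no check, because true guesses that are right
   already make the sigma-form imply phi.  Hence phi is equivalent to the
   disjunction, over its at most 4^|phi| guesses, of the sigma-form and these
   conditions, a formula in normal form of size at most 4^(3|phi|). *)

From Stdlib Require Import Classical Setoid Lia.
From HB Require Import structures.
From mathcomp Require Import all_boot zify.

Set Implicit Arguments.
Unset Strict Implicit.
Unset Printing Implicit Defensive.

Section Eventually.

Implicit Types P Q : nat -> Prop.

Definition eventually P := exists n, forall k, n <= k -> P k.

Definition infinitely P := forall n, exists k, n <= k /\ P k.

Lemma always_eventually P : (forall k, P k) -> eventually P.
Proof. by move=> HP; exists 0. Qed.

Lemma eventually_and P Q :
  eventually P -> eventually Q -> eventually (fun k => P k /\ Q k).
Proof.
move=> [m HP] [n HQ]; exists (m + n) => k le_k.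
by split; [apply: HP | apply: HQ]; lia.
Qed.

Lemma eventually_mono P Q :
  (forall k, P k -> Q k) -> eventually P -> eventually Q.
Proof. by move=> PQ [n HP]; exists n => k /HP /PQ. Qed.

Lemma eventually_mp P Q :
  eventually (fun k => P k -> Q k) -> eventually P -> eventually Q.
Proof.
move=> EPQ EP; apply: eventually_mono (eventually_and EPQ EP).
by move=> k [PQ /PQ].
Qed.

Lemma eventually_always P :
  eventually P -> eventually (fun k => forall j, P (k + j)).
Proof. by move=> [n HP]; exists n => k le_nk j; apply: HP; lia. Qed.

Lemma eventually_shift i P : eventually (fun k => P (i + k)) <-> eventually P.
Proof.
split=> [[n HP] | [n HP]].
- exists (i + n) => k le_k; have := HP (k - i).
  by rewrite subnKC; [apply; lia | lia].
- by exists n => k le_k; apply: HP; lia.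
Qed.

Lemma infinitely_mp P Q :
  eventually (fun k => P k -> Q k) -> infinitely P -> infinitely Q.
Proof.
move=> [m PQ] IP n; have [k [le_k Pk]] := IP (m + n).
by exists k; split; [lia | apply: PQ Pk; lia].
Qed.

Lemma infinitely_shift i P : infinitely (fun k => P (i + k)) <-> infinitely P.
Proof.
split=> IP n.
- by have [k [le_k Pk]] := IP n; exists (i + k); split; first lia.
- have [k [le_k Pk]] := IP (i + n); exists (k - i); split; first lia.
  by rewrite subnKC //; lia.
Qed.

Lemma not_infinitely P : ~ infinitely P -> eventually (fun k => ~ P k).
Proof.
move=> NIP; apply: NNPP => NEP; apply: NIP => n; apply: NNPP => NP; apply: NEP.
by exists n => k le_nk Pk; apply: NP; exists k.
Qed.

End Eventually.

Section Semantics.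

Variable Ap : finType.
Implicit Types (w : word Ap) (f g : formula Ap).

Lemma sat_ext w w' f : w =1 w' -> sat w f -> sat w' f.
Proof.
elim: f w w' => [||a|a|f IHf g IHg|f IHf g IHg|f IHf|f IHf g IHg|f IHf g IHg|f IHf|f IHf]
  w w' E /=; have Es i : suffix w i =1 suffix w' i by move=> k; apply: E.
- by [].
- by [].
- by rewrite E.
- by rewrite E.
- by case=> /IHf-/(_ _ E) ? /IHg-/(_ _ E).
- by case=> [/IHf|/IHg]-/(_ _ E); [left | right].
- exact: IHf.
- by case=> k [/IHg-/(_ _ (Es k)) ? Hf]; exists k; split=> // j /Hf /IHf; apply.
- case=> [Hf | [k [/IHg-/(_ _ (Es k)) ? Hf]]]; first by left=> k; exact: IHf (Es k) (Hf k).
  by right; exists k; split=> // j /Hf /IHf; apply.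
- by move=> Hf n; have [k [le_nk /IHf-/(_ _ (Es k))]] := Hf n; exists k.
- by case=> n Hf; exists n => k /Hf /IHf; apply.
Qed.

Definition holds w i f := sat (suffix w i) f.

Lemma holds_suffix w i k f : sat (suffix (suffix w i) k) f <-> holds w (i + k) f.
Proof. by split; apply: sat_ext => j; rewrite /suffix addnA. Qed.

Lemma sat_holds0 w f : sat w f <-> holds w 0 f.
Proof. by split; apply: sat_ext. Qed.

Lemma holdsAnd w i f g : holds w i (FAnd f g) <-> holds w i f /\ holds w i g.
Proof. by []. Qed.

Lemma holdsOr w i f g : holds w i (FOr f g) <-> holds w i f \/ holds w i g.
Proof. by []. Qed.

Lemma holdsX w i f : holds w i (FX f) <-> holds w (i + 1) f.
Proof. by rewrite -holds_suffix. Qed.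

Lemma holdsU w i f g : holds w i (FU f g) <->
  exists k, holds w (i + k) g /\ forall j, j < k -> holds w (i + j) f.
Proof. by rewrite /holds /=; setoid_rewrite holds_suffix. Qed.

Lemma holdsW w i f g :
  holds w i (FW f g) <-> (forall k, holds w (i + k) f) \/ holds w i (FU f g).
Proof. by rewrite holdsU /holds /=; setoid_rewrite holds_suffix. Qed.

Lemma holdsGF w i f : holds w i (FGF f) <-> infinitely (holds w ^~ f).
Proof.
by rewrite /holds /= -(infinitely_shift i); setoid_rewrite holds_suffix.
Qed.

Lemma holdsFG w i f : holds w i (FFG f) <-> eventually (holds w ^~ f).
Proof.
by rewrite /holds /= -(eventually_shift i); setoid_rewrite holds_suffix.
Qed.

End Semantics.

Section Temporal.

Variable Ap : finType.
Implicit Types (w : word Ap) (f g : formula Ap).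

Lemma holdsU_mono w i f f' g g' :
  (forall k, holds w (i + k) f -> holds w (i + k) f') ->
  (forall k, holds w (i + k) g -> holds w (i + k) g') ->
  holds w i (FU f g) -> holds w i (FU f' g').
Proof.
move=> ff' gg' /holdsU[k [Hg Hf]]; apply/holdsU.
by exists k; split=> [|j /Hf]; [apply: gg' | apply: ff'].
Qed.

Lemma holdsW_mono w i f f' g g' :
  (forall k, holds w (i + k) f -> holds w (i + k) f') ->
  (forall k, holds w (i + k) g -> holds w (i + k) g') ->
  holds w i (FW f g) -> holds w i (FW f' g').
Proof.
move=> ff' gg' /holdsW[Hf | HU]; apply/holdsW; first by left=> k; apply: ff'.
by right; apply: holdsU_mono HU.
Qed.

Lemma eventually_holdsU_mono w f f' g g' :
  eventually (fun i => holds w i f -> holds w i f') ->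
  eventually (fun i => holds w i g -> holds w i g') ->
  eventually (fun i => holds w i (FU f g) -> holds w i (FU f' g')).
Proof.
move=> Ef Eg; apply: eventually_mono (eventually_always (eventually_and Ef Eg)).
by move=> i H; apply: holdsU_mono => k; [exact: (H k).1 | exact: (H k).2].
Qed.

Lemma eventually_holdsW_mono w f f' g g' :
  eventually (fun i => holds w i f -> holds w i f') ->
  eventually (fun i => holds w i g -> holds w i g') ->
  eventually (fun i => holds w i (FW f g) -> holds w i (FW f' g')).
Proof.
move=> Ef Eg; apply: eventually_mono (eventually_always (eventually_and Ef Eg)).
by move=> i H; apply: holdsW_mono => k; [exact: (H k).1 | exact: (H k).2].
Qed.

Lemma holds_globally w i f :
  holds w i (FW f FFalse) <-> forall k, holds w (i + k) f.
Proof. by rewrite holdsW holdsU; split=> [[// | [k [[]]]] | ]; left. Qed.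

Lemma holdsU_W w i f g : holds w i (FU f g) -> holds w i (FW f g).
Proof. by move=> HU; apply/holdsW; right. Qed.

Lemma holdsU_of_W_infinitely w i f g :
  holds w i (FW f g) -> infinitely (holds w ^~ (FU f g)) -> holds w i (FU f g).
Proof.
case/holdsW=> [Hf IU | //]; have [k [le_ik /holdsU[k' [Hg _]]]] := IU i.
apply/holdsU; exists (k - i + k'); rewrite addnA (subnKC le_ik).
by split=> // j _; apply: Hf.
Qed.

Lemma eventually_W_of_globally w i f g :
  (forall k, holds w (i + k) f) -> eventually (holds w ^~ (FW f g)).
Proof.
move=> Hf; apply/(eventually_shift i)/always_eventually => k.
by apply/holdsW; left=> j; rewrite -addnA.
Qed.

Lemma holdsW_of_U_globally w i f g :
  holds w i (FU f (FOr g (FW f FFalse))) -> holds w i (FW f g).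
Proof.
case/holdsU=> k [[Hg | /holds_globally Gf] Hf]; apply/holdsW.
  by right; apply/holdsU; exists k.
left=> j; case: (ltnP j k) => [/Hf // | le_kj].
by rewrite -(subnKC le_kj) addnA; apply: Gf.
Qed.

Lemma holdsU_globally w i f f' :
  (forall k, holds w (i + k) f) -> eventually (fun j => holds w j f -> holds w j f') ->
  holds w i (FU f (FW f' FFalse)).
Proof.
move=> Hf [n ff']; apply/holdsU; exists n; split=> [|j _]; last exact: Hf.
by apply/holds_globally => k; apply: ff'; [lia | rewrite -addnA; apply: Hf].
Qed.

End Temporal.

(* The label of a U-node guesses whether GF of the node holds, that of a
   W-node whether FG of the node holds, and that of a limit node whether
   the node itself holds. *)
Inductive lformula (Ap : Type) : Type :=
  | LTrue | LFalse
  | LAtom of Ap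
  | LNAtom of Ap
  | LAnd of lformula Ap & lformula Ap
  | LOr of lformula Ap & lformula Ap
  | LX of lformula Ap
  | LU of bool & lformula Ap & lformula Ap
  | LW of bool & lformula Ap & lformula Ap
  | LGF of bool & lformula Ap
  | LFG of bool & lformula Ap.

Arguments LTrue {Ap}. Arguments LFalse {Ap}.

Definition lformula_eq_dec (Ap : eqType) (L L' : lformula Ap) : {L = L'} + {L <> L'}.
Proof. by decide equality; apply: eq_comparable. Defined.

HB.instance Definition _ (Ap : eqType) := comparableMixin (@lformula_eq_dec Ap).

Section Translations.

Variable Ap : Type.
Implicit Types (L : lformula Ap) (b : bool).

Fixpoint unlabel L : formula Ap :=
  match L with
  | LTrue => FTrue
  | LFalse => FFalse
  | LAtom a => FAtom a
  | LNAtom a => FNAtom a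
  | LAnd L1 L2 => FAnd (unlabel L1) (unlabel L2)
  | LOr L1 L2 => FOr (unlabel L1) (unlabel L2)
  | LX L1 => FX (unlabel L1)
  | LU _ L1 L2 => FU (unlabel L1) (unlabel L2)
  | LW _ L1 L2 => FW (unlabel L1) (unlabel L2)
  | LGF _ L1 => FGF (unlabel L1)
  | LFG _ L1 => FFG (unlabel L1)
  end.

Definition formula_of_bool b : formula Ap := if b then FTrue else FFalse.

Fixpoint nu_form L : formula Ap :=
  match L with
  | LTrue => FTrue
  | LFalse => FFalse
  | LAtom a => FAtom a
  | LNAtom a => FNAtom a
  | LAnd L1 L2 => FAnd (nu_form L1) (nu_form L2)
  | LOr L1 L2 => FOr (nu_form L1) (nu_form L2)
  | LX L1 => FX (nu_form L1)
  | LU b L1 L2 => if b then FW (nu_form L1) (nu_form L2) else FFalse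
  | LW _ L1 L2 => FW (nu_form L1) (nu_form L2)
  | LGF b _ | LFG b _ => formula_of_bool b
  end.

Fixpoint mu_form L : formula Ap :=
  match L with
  | LTrue => FTrue
  | LFalse => FFalse
  | LAtom a => FAtom a
  | LNAtom a => FNAtom a
  | LAnd L1 L2 => FAnd (mu_form L1) (mu_form L2)
  | LOr L1 L2 => FOr (mu_form L1) (mu_form L2)
  | LX L1 => FX (mu_form L1)
  | LU _ L1 L2 => FU (mu_form L1) (mu_form L2)
  | LW b L1 L2 => if b then FTrue else FU (mu_form L1) (mu_form L2)
  | LGF b _ | LFG b _ => formula_of_bool b
  end.

Fixpoint sigma_form L : formula Ap :=
  match L with
  | LTrue => FTrue
  | LFalse => FFalse
  | LAtom a => FAtom a
  | LNAtom a => FNAtom a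
  | LAnd L1 L2 => FAnd (sigma_form L1) (sigma_form L2)
  | LOr L1 L2 => FOr (sigma_form L1) (sigma_form L2)
  | LX L1 => FX (sigma_form L1)
  | LU _ L1 L2 => FU (sigma_form L1) (sigma_form L2)
  | LW b L1 L2 =>
      if b then FU (sigma_form L1) (FOr (sigma_form L2) (FW (nu_form L1) FFalse))
      else FU (sigma_form L1) (sigma_form L2)
  | LGF b _ | LFG b _ => formula_of_bool b
  end.

Fixpoint limit_conds L : formula Ap :=
  match L with
  | LTrue | LFalse | LAtom _ | LNAtom _ => FTrue
  | LAnd L1 L2 | LOr L1 L2 => FAnd (limit_conds L1) (limit_conds L2)
  | LX L1 => limit_conds L1
  | LU b L1 L2 => FAnd (if b then FGF (FU (mu_form L1) (mu_form L2)) else FTrue)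
                       (FAnd (limit_conds L1) (limit_conds L2))
  | LW b L1 L2 => FAnd (if b then FFG (FW (nu_form L1) (nu_form L2)) else FTrue)
                       (FAnd (limit_conds L1) (limit_conds L2))
  | LGF b L1 => FAnd (if b then FGF (mu_form L1) else FTrue) (limit_conds L1)
  | LFG b L1 => FAnd (if b then FFG (nu_form L1) else FTrue) (limit_conds L1)
  end.

Fixpoint labellings (f : formula Ap) : seq (lformula Ap) :=
  match f with
  | FTrue => [:: LTrue]
  | FFalse => [:: LFalse]
  | FAtom a => [:: LAtom a]
  | FNAtom a => [:: LNAtom a]
  | FAnd f1 f2 => [seq LAnd L1 L2 | L1 <- labellings f1, L2 <- labellings f2]
  | FOr f1 f2 => [seq LOr L1 L2 | L1 <- labellings f1, L2 <- labellings f2]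
  | FX f1 => map (@LX Ap) (labellings f1)
  | FU f1 f2 => [seq LU true L1 L2 | L1 <- labellings f1, L2 <- labellings f2]
             ++ [seq LU false L1 L2 | L1 <- labellings f1, L2 <- labellings f2]
  | FW f1 f2 => [seq LW true L1 L2 | L1 <- labellings f1, L2 <- labellings f2]
             ++ [seq LW false L1 L2 | L1 <- labellings f1, L2 <- labellings f2]
  | FGF f1 => map (LGF true) (labellings f1) ++ map (LGF false) (labellings f1)
  | FFG f1 => map (LFG true) (labellings f1) ++ map (LFG false) (labellings f1)
  end.

End Translations.

Arguments formula_of_bool {Ap}.

Ltac elim_by_labels L :=
  elim: L => [||a|a|L1 IH1 L2 IH2|L1 IH1 L2 IH2|L1 IH1|b L1 IH1 L2 IH2|b L1 IH1 L2 IH2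
             |b L1 IH1|b L1 IH1] /=;
  try match goal with b : bool |- _ => case: b => /= end.

Section NormalForm.

Variable Ap : Type.
Implicit Types (f : formula Ap) (L : lformula Ap).

Lemma normal_form_noU f : ~~ hasU f -> ~~ hasLimit f -> normal_form f.
Proof.
elim: f => //= [f1 IH1 f2 IH2|f1 IH1 f2 IH2|f1 IH1|f1 IH1 f2 IH2].
- by case/norP=> U1 U2 /norP[N1 N2]; rewrite IH1 ?IH2.
- by case/norP=> U1 U2 /norP[N1 N2]; rewrite IH1 ?IH2.
- by move=> U1 N1; rewrite N1 IH1.
- by case/norP=> U1 U2 /norP[N1 N2]; rewrite U1 U2 N1 N2 IH1 ?IH2.
Qed.

Lemma normal_form_noW f : ~~ hasW f -> ~~ hasLimit f -> normal_form f.
Proof.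
elim: f => //= [f1 IH1 f2 IH2|f1 IH1 f2 IH2|f1 IH1|f1 IH1 f2 IH2].
- by case/norP=> W1 W2 /norP[N1 N2]; rewrite IH1 ?IH2.
- by case/norP=> W1 W2 /norP[N1 N2]; rewrite IH1 ?IH2.
- by move=> W1 N1; rewrite N1 IH1.
- by case/norP=> W1 W2 /norP[N1 N2]; rewrite N1 N2 IH1 ?IH2.
Qed.

Ltac split_bool :=
  repeat match goal with H : is_true (_ && _) |- _ => case/andP: H => ? ? end;
  rewrite ?negb_or; repeat (apply/andP; split); auto.

Lemma nu_form_noU L : ~~ hasU (nu_form L).
Proof. by elim_by_labels L; split_bool. Qed.

Lemma nu_form_noLimit L : ~~ hasLimit (nu_form L).
Proof. by elim_by_labels L; split_bool. Qed.

Lemma mu_form_noW L : ~~ hasW (mu_form L).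
Proof. by elim_by_labels L; split_bool. Qed.

Lemma mu_form_noLimit L : ~~ hasLimit (mu_form L).
Proof. by elim_by_labels L; split_bool. Qed.

Lemma normal_form_nu_form L : normal_form (nu_form L).
Proof. exact: normal_form_noU (nu_form_noU L) (nu_form_noLimit L). Qed.

Lemma normal_form_mu_form L : normal_form (mu_form L).
Proof. exact: normal_form_noW (mu_form_noW L) (mu_form_noLimit L). Qed.

Local Hint Resolve nu_form_noU nu_form_noLimit mu_form_noW mu_form_noLimit
  normal_form_nu_form normal_form_mu_form : core.

Lemma sigma_form_noLimit_normal L :
  ~~ hasLimit (sigma_form L) && normal_form (sigma_form L).
Proof. by elim_by_labels L; split_bool. Qed.

Lemma normal_form_limit_conds L : normal_form (limit_conds L).
Proof. by elim_by_labels L; split_bool. Qed.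

End NormalForm.

Section Size.

Variable Ap : Type.
Implicit Types (f : formula Ap) (L : lformula Ap).

Lemma fsize_lt_exp4 f : fsize f < 4 ^ fsize f.
Proof. exact: ltn_expl. Qed.

Lemma exp4_fsize_ge4 f : 4 <= 4 ^ fsize f.
Proof. by rewrite -{1}(expn1 4) leq_exp2l //; case: f. Qed.

Lemma fsize_nu_form L : fsize (nu_form L) <= fsize (unlabel L).
Proof. by elim_by_labels L; lia. Qed.

Lemma fsize_mu_form L : fsize (mu_form L) <= fsize (unlabel L).
Proof. by elim_by_labels L; lia. Qed.

Lemma fsize_sigma_form L : fsize (sigma_form L) <= 4 ^ fsize (unlabel L).
Proof.
elim_by_labels L; rewrite ?expnS ?expnD //.
all: try have := fsize_nu_form L1.
all: try have := fsize_lt_exp4 (unlabel L1); try have := exp4_fsize_ge4 (unlabel L1).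
all: try have := fsize_lt_exp4 (unlabel L2); try have := exp4_fsize_ge4 (unlabel L2).
all: move=> *; nia.
Qed.

Lemma fsize_limit_conds L : fsize (limit_conds L) <= 4 ^ fsize (unlabel L).
Proof.
elim_by_labels L; rewrite ?expnS ?expnD //.
all: try have := fsize_mu_form L1; try have := fsize_nu_form L1.
all: try have := fsize_mu_form L2; try have := fsize_nu_form L2.
all: try have := fsize_lt_exp4 (unlabel L1); try have := exp4_fsize_ge4 (unlabel L1).
all: try have := fsize_lt_exp4 (unlabel L2); try have := exp4_fsize_ge4 (unlabel L2).
all: move=> *; nia.
Qed.

End Size.

Section Labellings.

Variable Ap : eqType.
Implicit Types (f : formula Ap) (L : lformula Ap).

Lemma unlabel_labellings f L : L \in labellings f -> unlabel L = f.
Proof.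
elim: f L => [||a|a|f1 IH1 f2 IH2|f1 IH1 f2 IH2|f1 IH1|f1 IH1 f2 IH2|f1 IH1 f2 IH2
             |f1 IH1|f1 IH1] L /=;
  try by rewrite inE => /eqP ->.
all: rewrite ?mem_cat; try case/orP.
all: by [case/allpairsP=> -[L1 L2] /= [/IH1 <- /IH2 <- ->] | case/mapP=> L1 /IH1 <- ->].
Qed.

Lemma size_labellings f : size (labellings f) <= 4 ^ fsize f.
Proof.
elim: f => [||a|a|f1 IH1 f2 IH2|f1 IH1 f2 IH2|f1 IH1|f1 IH1 f2 IH2|f1 IH1 f2 IH2
           |f1 IH1|f1 IH1] //=;
  rewrite ?size_cat ?size_allpairs ?size_map expnS ?expnD; nia.
Qed.

End Labellings.

Lemma exists_label (P : Prop) : exists b : bool, (b -> P) /\ (P -> b).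
Proof. by case: (classic P) => HP; [exists true | exists false]. Qed.

Section Correctness.

Variable Ap : finType.
Implicit Types (w : word Ap) (f : formula Ap) (L : lformula Ap).

Fixpoint labels_agree (R : bool -> Prop -> Prop) w L : Prop :=
  match L with
  | LTrue | LFalse | LAtom _ | LNAtom _ => True
  | LAnd L1 L2 | LOr L1 L2 => labels_agree R w L1 /\ labels_agree R w L2
  | LX L1 => labels_agree R w L1
  | LU b L1 L2 => R b (infinitely (holds w ^~ (FU (unlabel L1) (unlabel L2))))
                  /\ labels_agree R w L1 /\ labels_agree R w L2
  | LW b L1 L2 => R b (eventually (holds w ^~ (FW (unlabel L1) (unlabel L2))))
                  /\ labels_agree R w L1 /\ labels_agree R w L2
  | LGF b L1 => R b (infinitely (holds w ^~ (unlabel L1))) /\ labels_agree R w L1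
  | LFG b L1 => R b (eventually (holds w ^~ (unlabel L1))) /\ labels_agree R w L1
  end.

Local Notation labels_sound := (labels_agree (fun b P => b -> P)).
Local Notation labels_complete := (labels_agree (fun b P => P -> b)).

Lemma nu_form_sound w L i :
  labels_sound w L -> holds w i (nu_form L) -> holds w i (unlabel L).
Proof.
elim: L i => [||a|a|L1 IH1 L2 IH2|L1 IH1 L2 IH2|L1 IH1|b L1 IH1 L2 IH2|b L1 IH1 L2 IH2
             |b L1 IH1|b L1 IH1] i //=.
- by move=> [S1 S2] [H1 H2]; split; [exact: IH1 | exact: IH2].
- by move=> [S1 S2] [H1 | H2]; [left; exact: IH1 | right; exact: IH2].
- by move=> S1 /holdsX/(IH1 _ S1) ?; apply/holdsX.
- case: b => -[GF [S1 S2]] // HW; apply: holdsU_of_W_infinitely (GF isT).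
  by apply: holdsW_mono HW => k; [exact: IH1 | exact: IH2].
- move=> [_ [S1 S2]]; apply: holdsW_mono => k; [exact: IH1 | exact: IH2].
- by case: b => -[GF _] // _; apply/holdsGF/GF.
- by case: b => -[FG _] // _; apply/holdsFG/FG.
Qed.

Lemma nu_form_complete w L : labels_complete w L ->
  eventually (fun i => holds w i (unlabel L) -> holds w i (nu_form L)).
Proof.
elim: L => [||a|a|L1 IH1 L2 IH2|L1 IH1 L2 IH2|L1 IH1|b L1 IH1 L2 IH2|b L1 IH1 L2 IH2
           |b L1 IH1|b L1 IH1] /=;
  try by move=> _; apply: always_eventually.
- move=> [/IH1 E1 /IH2 E2]; apply: eventually_mono (eventually_and E1 E2).
  by move=> i [H1 H2] [/H1 ? /H2 ?].
- move=> [/IH1 E1 /IH2 E2]; apply: eventually_mono (eventually_and E1 E2).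
  by move=> i [H1 H2] [/H1 | /H2]; [left | right].
- move=> /IH1/eventually_always E1; apply: eventually_mono E1.
  by move=> i H1 /holdsX/H1 ?; apply/holdsX.
- case: b => -[GF [/IH1 E1 /IH2 E2]].
    apply: eventually_mono (eventually_holdsU_mono E1 E2).
    by move=> i H /H/holdsU_W.
  have /not_infinitely : ~ infinitely (holds w ^~ (FU (unlabel L1) (unlabel L2))).
    by move/GF.
  by apply: eventually_mono => i.
- by move=> [_ [/IH1 E1 /IH2 E2]]; apply: eventually_holdsW_mono.
- by move=> [GF _]; apply: always_eventually => i /holdsGF/GF ->.
- by move=> [FG _]; apply: always_eventually => i /holdsFG/FG ->.
Qed.

Lemma mu_form_complete w L i :
  labels_complete w L -> holds w i (unlabel L) -> holds w i (mu_form L).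
Proof.
elim: L i => [||a|a|L1 IH1 L2 IH2|L1 IH1 L2 IH2|L1 IH1|b L1 IH1 L2 IH2|b L1 IH1 L2 IH2
             |b L1 IH1|b L1 IH1] i //=.
- by move=> [C1 C2] [H1 H2]; split; [exact: IH1 | exact: IH2].
- by move=> [C1 C2] [H1 | H2]; [left; exact: IH1 | right; exact: IH2].
- by move=> C1 /holdsX/(IH1 _ C1) ?; apply/holdsX.
- move=> [_ [C1 C2]]; apply: holdsU_mono => k; [exact: IH1 | exact: IH2].
- case: b => -[FG [C1 C2]] //; case/holdsW=> [/eventually_W_of_globally/FG // | ].
  by apply: holdsU_mono => k; [exact: IH1 | exact: IH2].
- by move=> [GF _] /holdsGF/GF ->.
- by move=> [FG _] /holdsFG/FG ->.
Qed.

Lemma mu_form_sound w L : labels_sound w L ->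
  eventually (fun i => holds w i (mu_form L) -> holds w i (unlabel L)).
Proof.
elim: L => [||a|a|L1 IH1 L2 IH2|L1 IH1 L2 IH2|L1 IH1|b L1 IH1 L2 IH2|b L1 IH1 L2 IH2
           |b L1 IH1|b L1 IH1] /=;
  try by move=> _; apply: always_eventually.
- move=> [/IH1 E1 /IH2 E2]; apply: eventually_mono (eventually_and E1 E2).
  by move=> i [H1 H2] [/H1 ? /H2 ?].
- move=> [/IH1 E1 /IH2 E2]; apply: eventually_mono (eventually_and E1 E2).
  by move=> i [H1 H2] [/H1 | /H2]; [left | right].
- move=> /IH1/eventually_always E1; apply: eventually_mono E1.
  by move=> i H1 /holdsX/H1 ?; apply/holdsX.
- by move=> [_ [/IH1 E1 /IH2 E2]]; apply: eventually_holdsU_mono.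
- case: b => -[FG [/IH1 E1 /IH2 E2]].
    by apply: eventually_mono (FG isT) => i.
  apply: eventually_mono (eventually_holdsU_mono E1 E2).
  by move=> i H /H/holdsU_W.
- case: b => -[GF _]; apply: always_eventually => i // _.
  exact/holdsGF/GF.
- case: b => -[FG _]; apply: always_eventually => i // _.
  exact/holdsFG/FG.
Qed.

Lemma sigma_form_sound w L i :
  labels_sound w L -> holds w i (sigma_form L) -> holds w i (unlabel L).
Proof.
elim: L i => [||a|a|L1 IH1 L2 IH2|L1 IH1 L2 IH2|L1 IH1|b L1 IH1 L2 IH2|b L1 IH1 L2 IH2
             |b L1 IH1|b L1 IH1] i //=.
- by move=> [S1 S2] [H1 H2]; split; [exact: IH1 | exact: IH2].
- by move=> [S1 S2] [H1 | H2]; [left; exact: IH1 | right; exact: IH2].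
- by move=> S1 /holdsX/(IH1 _ S1) ?; apply/holdsX.
- move=> [_ [S1 S2]]; apply: holdsU_mono => k; [exact: IH1 | exact: IH2].
- case: b => -[_ [S1 S2]] HU; last first.
    by apply: holdsU_W; apply: holdsU_mono HU => k; [exact: IH1 | exact: IH2].
  apply: holdsW_of_U_globally; apply: holdsU_mono HU => k; first exact: IH1.
  case/holdsOr=> [H2 | HG]; apply/holdsOr; [by left; exact: IH2 | right].
  by apply: holdsW_mono HG => j //; apply: nu_form_sound.
- by case: b => -[GF _] // _; apply/holdsGF/GF.
- by case: b => -[FG _] // _; apply/holdsFG/FG.
Qed.

Lemma sigma_form_complete w L i :
  labels_complete w L -> holds w i (unlabel L) -> holds w i (sigma_form L).
Proof.
elim: L i => [||a|a|L1 IH1 L2 IH2|L1 IH1 L2 IH2|L1 IH1|b L1 IH1 L2 IH2|b L1 IH1 L2 IH2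
             |b L1 IH1|b L1 IH1] i //=.
- by move=> [C1 C2] [H1 H2]; split; [exact: IH1 | exact: IH2].
- by move=> [C1 C2] [H1 | H2]; [left; exact: IH1 | right; exact: IH2].
- by move=> C1 /holdsX/(IH1 _ C1) ?; apply/holdsX.
- move=> [_ [C1 C2]]; apply: holdsU_mono => k; [exact: IH1 | exact: IH2].
- case: b => -[FG [C1 C2]] /holdsW[G1 | HU].
  + apply: holdsU_mono (holdsU_globally G1 (nu_form_complete C1)) => k.
      exact: IH1.
    by right.
  + by apply: holdsU_mono HU => k; [exact: IH1 | left; exact: IH2].
  + by have := FG (eventually_W_of_globally _ G1).
  + by apply: holdsU_mono HU => k; [exact: IH1 | exact: IH2].
- by move=> [GF _] /holdsGF/GF ->.
- by move=> [FG _] /holdsFG/FG ->.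
Qed.

Lemma limit_conds_sound w L i : holds w i (limit_conds L) -> labels_sound w L.
Proof.
elim: L => [||a|a|L1 IH1 L2 IH2|L1 IH1 L2 IH2|L1 IH1|b L1 IH1 L2 IH2|b L1 IH1 L2 IH2
           |b L1 IH1|b L1 IH1] //=.
- by move=> [/IH1 S1 /IH2 S2].
- by move=> [/IH1 S1 /IH2 S2].
- move=> /holdsAnd[GF /holdsAnd[/IH1 S1 /IH2 S2]]; split=> //.
  case: b GF => // /holdsGF GF _.
  exact: infinitely_mp (eventually_holdsU_mono (mu_form_sound S1) (mu_form_sound S2)) GF.
- move=> /holdsAnd[FG /holdsAnd[/IH1 S1 /IH2 S2]]; split=> //.
  case: b FG => // /holdsFG FG _.
  apply: eventually_mono FG => j; apply: holdsW_mono => k; exact: nu_form_sound.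
- move=> /holdsAnd[GF /IH1 S1]; split=> //; case: b GF => // /holdsGF GF _.
  exact: infinitely_mp (mu_form_sound S1) GF.
- move=> /holdsAnd[FG /IH1 S1]; split=> //; case: b FG => // /holdsFG FG _.
  by apply: eventually_mono FG => j; apply: nu_form_sound.
Qed.

Lemma limit_conds_complete w L i :
  labels_sound w L -> labels_complete w L -> holds w i (limit_conds L).
Proof.
elim: L => [||a|a|L1 IH1 L2 IH2|L1 IH1 L2 IH2|L1 IH1|b L1 IH1 L2 IH2|b L1 IH1 L2 IH2
           |b L1 IH1|b L1 IH1] //=.
- by move=> [S1 S2] [C1 C2]; split; [exact: IH1 | exact: IH2].
- by move=> [S1 S2] [C1 C2]; split; [exact: IH1 | exact: IH2].
- move=> [GF [S1 S2]] [_ [C1 C2]]; apply/holdsAnd.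
  split; last by split; [exact: IH1 | exact: IH2].
  case: b GF => // GF; apply/holdsGF/(infinitely_mp _ (GF isT))/always_eventually.
  by move=> j; apply: holdsU_mono => k; apply: mu_form_complete.
- move=> [FG [S1 S2]] [_ [C1 C2]]; apply/holdsAnd.
  split; last by split; [exact: IH1 | exact: IH2].
  case: b FG => // FG; apply/holdsFG/(eventually_mp _ (FG isT)).
  exact: eventually_holdsW_mono (nu_form_complete C1) (nu_form_complete C2).
- move=> [GF S1] [_ C1]; apply/holdsAnd; split; last exact: IH1.
  case: b GF => // GF; apply/holdsGF/(infinitely_mp _ (GF isT))/always_eventually.
  by move=> j; apply: mu_form_complete.
- move=> [FG S1] [_ C1]; apply/holdsAnd; split; last exact: IH1.
  case: b FG => // FG; apply/holdsFG/(eventually_mp _ (FG isT)).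
  exact: nu_form_complete.
Qed.

Lemma labelling_faithful w f :
  exists2 L, L \in labellings f & labels_sound w L /\ labels_complete w L.
Proof.
elim: f => [||a|a|f1 IH1 f2 IH2|f1 IH1 f2 IH2|f1 IH1|f1 IH1 f2 IH2|f1 IH1 f2 IH2
           |f1 IH1|f1 IH1] /=; try by eexists; first exact: mem_head.
all: try have [L1 mem1 [S1 C1]] := IH1; try have [L2 mem2 [S2 C2]] := IH2.
- by exists (LAnd L1 L2); [exact: allpairs_f | split; split].
- by exists (LOr L1 L2); [exact: allpairs_f | split; split].
- by exists (LX L1); [exact: map_f | split].
- have [b [bP Pb]] := exists_label (infinitely (holds w ^~ (FU (unlabel L1) (unlabel L2)))).
  exists (LU b L1 L2); last by split; split.
  by case: b {bP Pb}; rewrite mem_cat (allpairs_f _ mem1 mem2) ?orbT.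
- have [b [bP Pb]] := exists_label (eventually (holds w ^~ (FW (unlabel L1) (unlabel L2)))).
  exists (LW b L1 L2); last by split; split.
  by case: b {bP Pb}; rewrite mem_cat (allpairs_f _ mem1 mem2) ?orbT.
- have [b [bP Pb]] := exists_label (infinitely (holds w ^~ (unlabel L1))).
  exists (LGF b L1); last by split; split.
  by case: b {bP Pb}; rewrite mem_cat (map_f _ mem1) ?orbT.
- have [b [bP Pb]] := exists_label (eventually (holds w ^~ (unlabel L1))).
  exists (LFG b L1); last by split; split.
  by case: b {bP Pb}; rewrite mem_cat (map_f _ mem1) ?orbT.
Qed.

End Correctness.

Section Normalization.

Variable Ap : finType.
Implicit Types (w : word Ap) (phi : formula Ap).

Lemma holds_bigFOr (I : eqType) (r : seq I) (F : I -> formula Ap) w i :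
  holds w i (\big[@FOr Ap/FFalse]_(x <- r) F x) <-> exists2 x, x \in r & holds w i (F x).
Proof.
elim: r => [|x r IH]; first by rewrite big_nil; split=> [[] | []].
rewrite big_cons holdsOr IH; split=> [[Hx | [y ry Hy]] | [y]].
- by exists x; rewrite ?mem_head.
- by exists y; rewrite // in_cons ry orbT.
- by rewrite in_cons => /predU1P[-> | ry] Hy; [left | right; exists y].
Qed.

Lemma normal_form_bigFOr (I : Type) (r : seq I) (F : I -> formula Ap) :
  (forall x, normal_form (F x)) -> normal_form (\big[@FOr Ap/FFalse]_(x <- r) F x).
Proof. by move=> nfF; elim/big_rec: _ => // x f _ nf; rewrite /= nfF. Qed.

Lemma fsize_bigFOr (I : eqType) (r : seq I) (F : I -> formula Ap) M :
  {in r, forall x, fsize (F x) <= M} ->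
  fsize (\big[@FOr Ap/FFalse]_(x <- r) F x) <= size r * M.+1 + 1.
Proof.
elim: r => [|x r IH] F_le; rewrite ?big_nil ?big_cons //=.
have le_r : {in r, forall y, fsize (F y) <= M}.
  by move=> y ry; apply: F_le; rewrite in_cons ry orbT.
by have := F_le x (mem_head x r); have := IH le_r; rewrite mulSn; lia.
Qed.

Definition normalize phi : formula Ap :=
  \big[@FOr Ap/FFalse]_(L <- labellings phi) FAnd (sigma_form L) (limit_conds L).

Lemma normal_form_normalize phi : normal_form (normalize phi).
Proof.
apply: normal_form_bigFOr => L /=.
by have /andP[_ ->] := sigma_form_noLimit_normal L; rewrite normal_form_limit_conds.
Qed.

Lemma normalize_equiv phi : fequiv (normalize phi) phi.
Proof.
move=> w; rewrite /normalize sat_holds0 (sat_holds0 w phi) holds_bigFOr; split.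
  case=> L /unlabel_labellings <- /holdsAnd[HS /limit_conds_sound S].
  exact: sigma_form_sound S HS.
have [L memL [S C]] := labelling_faithful w phi.
move=> H; exists L => //; split; last exact: limit_conds_complete.
by apply: sigma_form_complete C _; rewrite (unlabel_labellings memL).
Qed.

Lemma fsize_normalize phi : fsize (normalize phi) <= 4 ^ (3 * fsize phi).
Proof.
rewrite mulnC expnM; set Z := 4 ^ fsize phi.
apply: leq_trans (fsize_bigFOr (M := 2 * Z + 1) _) _.
  move=> L /unlabel_labellings phiE /=; rewrite /Z -phiE.
  by rewrite addn1 ltnS mul2n -addnn leq_add ?fsize_sigma_form ?fsize_limit_conds.
have := size_labellings phi; have := exp4_fsize_ge4 phi; rewrite -/Z.
by move: (size _) => s; rewrite !expnS expn0 muln1; nia.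
Qed.

End Normalization.

Theorem theorem3 (Ap : finType) (phi : formula Ap) :
  exists phi' : formula Ap,
    normal_form phi' /\ fequiv phi' phi /\ fsize phi' <= 4 ^ (7 * fsize phi).
Proof.
exists (normalize phi); split; first exact: normal_form_normalize.
split; first exact: normalize_equiv.
apply: leq_trans (fsize_normalize phi) _.
by rewrite leq_exp2l // leq_mul2r orbT.
Qed.
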